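(* The bracket $\Big[\sum_{(a,n)}P^{a,n}D_{a,n},\sum_{(b,m)}Q^{b,m}D_{b,m}\Big]=\sum_{(a,n),(b,m)\in\mathcal I\times\mathbb Z}\Big(P^{b,m}\frac{\partial Q^{a,n}}{\partial X^{b,m}}-Q^{b,m}\frac{\partial P^{a,n}}{\partial X^{b,m}}\Big)D_{a,n}$ is well defined on $\overline{\mathrm{Der}}\,\mathcal O$ and makes it a Lie algebra, and $\mathrm{Der}_w\mathcal O$ is a Lie subalgebra of $\overline{\mathrm{Der}}\,\mathcal O$.
   Context: $\mathcal I$ is a finite index set, $\mathcal O=\mathbb C[X^{a,n}]_{(a,n)\in\mathcal I\times\mathbb Z}$, $D_{a,n}=\partial/\partial X^{a,n}$. $\overline{\mathrm{Der}}\,\mathcal O=\prod_{(a,n)\in\mathcal I\times\mathbb Z}\mathcal O D_{a,n}$ is the space of possibly infinite formal sums $\sum_{(a,n)}P^{a,n}(X)D_{a,n}$. A collection $\{P^{a,n}\}_{(a,n)\in\mathcal I\times\mathbb Z}$ in $\mathcal O$ has widening gap if for every $K\ge1$, $P^{a,n}\in\mathbb C[X^{b,m}:|m|<|n|-K,\ b\in\mathcal I]$ for all $a$, for all but finitely many $n\in\mathbb Z$. $\mathrm{Der}_w\mathcal O\subset\overline{\mathrm{Der}}\,\mathcal O$ is the subspace of sums whose coefficient collection has widening gap. *)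

From HB Require Import structures.
From mathcomp Require Import all_boot all_order all_algebra.
From mathcomp Require Import finmap.
From mathcomp Require Import reals.
From mathcomp Require Import complex.
From mathcomp Require Import monalg.

Set Implicit Arguments.
Unset Strict Implicit.
Unset Printing Implicit Defensive.

Import Order.TTheory GRing.Theory Num.Theory.
Local Open Scope ring_scope.

(* Variables X^{a,n} are indexed by I * int;  the ground field is C = R[i]
   for an arbitrary model R of the real numbers. *)
Definition Var (I : finType) := (I * int)%type.

Definition Opoly (R : realType) (I : finType) :=
  {malg R[i][{cmonom (Var I)}]}.

Definition Xv (R : realType) (I : finType) (v : Var I) : Opoly R I :=
  << ucm v >>.

Definition pderiv (R : realType) (I : finType) (v : Var I) (p : Opoly R I)
  : Opoly R I :=
  \sum_(m <- msupp p) ((cmonom_val m v)%:R * p@_m)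
      *: << divcm m (ucm v) >>.

Definition vars (R : realType) (I : finType) (p : Opoly R I) : seq (Var I) :=
  undup (flatten [seq val (finsupp (cmonom_val m))
                 | m : {cmonom (Var I)} <- enum_fset (msupp p)]).

(* \overline{Der} O = prod_{(a,n)} O D_{a,n}: a formal sum sum P^{a,n} D_{a,n}
   is represented by its coefficient family (a,n) |-> P^{a,n}. *)
Definition DerBar (R : realType) (I : finType) := Var I -> Opoly R I.

Definition der_zero (R : realType) (I : finType) : DerBar R I := fun _ => 0.
Arguments der_zero R I : clear implicits.
Definition der_add (R : realType) (I : finType) (P Q : DerBar R I) : DerBar R I :=
  fun v => P v + Q v.
Definition der_scale (R : realType) (I : finType) (c : R[i]) (P : DerBar R I)
  : DerBar R I := fun v => c *: P v.

Definition bracket_term (R : realType) (I : finType) (P Q : DerBar R I)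
  (an bm : Var I) : Opoly R I :=
  P bm * pderiv bm (Q an) - Q bm * pderiv bm (P an).

(* the bracket: the (formally infinite) sum over (b,m), computed over the
   finitely many variables occurring in P^{a,n} or Q^{a,n} *)
Definition bracket (R : realType) (I : finType) (P Q : DerBar R I) : DerBar R I :=
  fun an => \sum_(bm <- undup (vars (P an) ++ vars (Q an)))
              bracket_term P Q an bm.

Definition poly_in_vars_lt (R : realType) (I : finType) (p : Opoly R I) (N : int)
  : Prop :=
  forall bm : Var I, bm \in vars p -> (`|bm.2|%:Z < N)%R.

Definition widening_gap (R : realType) (I : finType) (P : DerBar R I) : Prop :=
  forall K : nat, (1 <= K)%N ->
    exists S : seq int, forall n : int, n \notin S ->
      forall a : I, poly_in_vars_lt (P (a, n)) (`|n|%:Z - K%:Z).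

Definition Der_w (R : realType) (I : finType) (P : DerBar R I) : Prop :=
  widening_gap P.

(* A formal sum P = sum_b P^b D_b acts on O as the derivation
   D_P x = sum_b P^b dx/dX^b, a finite sum since only the variables of x
   contribute, and the bracket is [P,Q]^a = D_P Q^a - D_Q P^a.  This is
   bilinear and alternating, and since partial derivatives commute,
   D_P D_Q - D_Q D_P = D_[P,Q]; unfolding the outer brackets of the Jacobi sum
   with this identity leaves twelve terms D_X D_Y Z^a cancelling in pairs.
   For the widening gap, [P,Q]^(a,n) involves only the variables of P^(a,n)
   and Q^(a,n) and those of P^b, Q^b for b among them.  Off finitely many n,
   such b = (b',m) have |m| < |n| - K, and then P^b, Q^b involve only
   variables of index below |n| - K: by the gap condition when m is not
   exceptional, and for |n| large by a uniform bound on the finitely many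
   exceptional rows otherwise. *)

From HB Require Import structures.
From mathcomp Require Import all_boot all_order all_algebra.
From mathcomp Require Import finmap reals complex monalg.
From mathcomp Require Import zify ring.
Import GRing.Theory Num.Theory.
Local Open Scope ring_scope.

Set Implicit Arguments.
Unset Strict Implicit.
Unset Printing Implicit Defensive.

Section CommutingDerivations.
Variables (A : comRingType) (V : eqType) (d : V -> A -> A).
Hypothesis derB : forall v, {morph d v : x y / x - y}.
Hypothesis derM : forall v x y, d v (x * y) = d v x * y + x * d v y.
Hypothesis der_comm : forall v w x, d v (d w x) = d w (d v x).
Variable T : seq V.

HB.instance Definition _ v := GRing.isZmodMorphism.Build A A (d v) (derB v).

Definition der_comb (P : V -> A) (x : A) : A := \sum_(b <- T) P b * d b x.

Lemma der_comb_comp P Q x :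
  der_comb P (der_comb Q x) = \sum_(c <- T) der_comb P (Q c) * d c x
    + \sum_(b <- T) \sum_(c <- T) P b * Q c * d b (d c x).
Proof.
under [X in X + _]eq_bigr => c _ do rewrite mulr_suml.
rewrite exchange_big -big_split /=; apply: eq_bigr => b _.
rewrite raddf_sum mulr_sumr -big_split /=; apply: eq_bigr => c _.
by rewrite derM mulrDr !mulrA.
Qed.

Lemma der_comb_commutator P Q x :
  der_comb P (der_comb Q x) - der_comb Q (der_comb P x)
  = \sum_(c <- T) (der_comb P (Q c) - der_comb Q (P c)) * d c x.
Proof.
have sym : \sum_(b <- T) \sum_(c <- T) P b * Q c * d b (d c x)
         = \sum_(b <- T) \sum_(c <- T) Q b * P c * d b (d c x).
  rewrite exchange_big; apply: eq_bigr => b _; apply: eq_bigr => c _.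
  by rewrite der_comm [P c * _]mulrC.
rewrite !der_comb_comp sym opprD addrACA subrr addr0 -sumrB.
by apply: eq_bigr => c _; rewrite mulrBl.
Qed.
End CommutingDerivations.

Lemma eq_big_uniq_supp (V : eqType) (M : nmodType) (r s : seq V) (F : V -> M) :
  uniq r -> uniq s -> (forall x, x \notin r -> F x = 0) ->
  (forall x, x \notin s -> F x = 0) ->
  \sum_(x <- r) F x = \sum_(x <- s) F x.
Proof.
move=> ur us Fr Fs; apply: perm_big_supp.
apply: uniq_perm; rewrite ?filter_uniq //.
move=> x; rewrite !mem_filter; have [//|Fx] := eqVneq (F x) 0.
by rewrite (contra_neqT (Fr x) Fx) (contra_neqT (Fs x) Fx).
Qed.

Section CmonomDivision.
Variable J : choiceType.
Implicit Types (m k : {cmonom J}) (v : J).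

Lemma mulcmUK m v : divcm (mulcm m (ucm v)) (ucm v) = m.
Proof. by apply/eqP/cmP => w; rewrite divcmE mulcmE addnK. Qed.

Lemma divcmUK k v : (0 < k v)%N -> mulcm (divcm k (ucm v)) (ucm v) = k.
Proof.
move=> kv; apply/eqP/cmP => w; rewrite mulcmE divcmE ucmE.
by case: eqVneq => [<-|_]; rewrite ?subn0 ?addn0 // subnK.
Qed.

Lemma divcm_mulcmUl k1 k2 v : (0 < k1 v)%N ->
  divcm (mulcm k1 k2) (ucm v) = mulcm (divcm k1 (ucm v)) k2.
Proof.
move=> k1v; apply/eqP/cmP => w; rewrite divcmE !mulcmE divcmE ucmE.
by case: eqVneq => [<-|_] /=; rewrite ?subn0 ?addnBAC.
Qed.

Lemma divcm_mulcmUr k1 k2 v : (0 < k2 v)%N ->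
  divcm (mulcm k1 k2) (ucm v) = mulcm k1 (divcm k2 (ucm v)).
Proof. by move=> k2v; rewrite mulcmC divcm_mulcmUl // mulcmC. Qed.
End CmonomDivision.

Section PartialDerivative.
Variables (R : realType) (I : finType).
Local Notation O := (Opoly R I).
Local Notation V := (Var I).
Implicit Types (p q x y : O) (v w an bm : V) (m k : {cmonom V}) (c : R[i]).
Implicit Types (P Q S : DerBar R I).

(* [pderiv] unfolds to a big sum, and [rewrite] compares distinct
   [pderiv v p] terms by conversion, which is prohibitively slow; all
   computations go through a locked copy. *)
Fact pderiv_key : unit. Proof. by []. Qed.
Definition pd := locked_with pderiv_key (@pderiv R I).

Lemma pderivE : @pderiv R I = pd.
Proof. by rewrite /pd unlock. Qed.

Lemma mcoeff_pd v p m : (pd v p)@_m = p@_(mulcm m (ucm v)) *+ (m v).+1.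
Proof.
set k0 := mulcm m (ucm v).
have term k : (((k v)%:R * p@_k) *: (<< divcm k (ucm v) >> : O))@_m
              = p@_k0 *+ (m v).+1 *+ (k == k0).
  rewrite mcoeffZ mcoeffU1; have [->|nk] := eqVneq k k0.
    by rewrite mulcmUK eqxx mulr1 mulr_natl mulcmE ucmE eqxx addn1.
  have [kv0|kv] := eqVneq (k v) 0%N; first by rewrite kv0 !mul0r.
  have [km|] := eqVneq (divcm k (ucm v)) m; last by rewrite mulr0.
  by case/eqP: nk; rewrite /k0 -km divcmUK // lt0n.
rewrite -pderivE /pderiv raddf_sum (eq_bigr _ (fun k _ => term k)).
rewrite (@eq_big_uniq_supp _ _ _ [:: k0]) ?big_seq1 ?eqxx ?fset_uniq // => k.
  by case: eqVneq => [->|] //= /mcoeff_outdom ->; rewrite mul0rn.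
by rewrite mem_seq1; case: eqVneq.
Qed.

Lemma pd_is_linear v : linear (pd v).
Proof.
move=> c p q; apply/malgP => m.
by rewrite mcoeffD mcoeffZ !mcoeff_pd mcoeffD mcoeffZ mulrnDl mulrnAr.
Qed.

HB.instance Definition _ v :=
  GRing.isLinear.Build R[i] O O *:%R (pd v) (pd_is_linear v).

Lemma pd_comm v w p : pd v (pd w p) = pd w (pd v p).
Proof.
apply/malgP => m; rewrite !mcoeff_pd -!mulrnA !mulcmE !ucmE -!mulcmA.
rewrite [mulcm (ucm v) _]mulcmC (eq_sym w).
by case: eqVneq => [->|_]; rewrite ?addn0 // mulnC.
Qed.

Lemma pdU v c k : pd v << c *g k >> = << c *+ k v *g divcm k (ucm v) >>.
Proof.
apply/malgP => m; rewrite mcoeff_pd !mcoeffU.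
have [->|nk] := eqVneq k (mulcm m (ucm v)).
  by rewrite mulcmUK eqxx mulcmE ucmE eqxx addn1.
rewrite mulr0n mul0rn.
have [kv0|kv] := eqVneq (k v) 0%N; first by rewrite kv0 mulr0n mul0rn.
have [km|] := eqVneq (divcm k (ucm v)) m; last by [].
by case/eqP: nk; rewrite -km divcmUK // lt0n.
Qed.

Lemma mulUU c1 c2 k1 k2 :
  << c1 *g k1 >> * << c2 *g k2 >> = << c1 * c2 *g mulcm k1 k2 >> :> O.
Proof. by rewrite malgM_def fgmulUU. Qed.

Lemma pdM_monomial v a b k1 k2 :
  pd v (<< a *g k1 >> * << b *g k2 >>)
  = pd v << a *g k1 >> * << b *g k2 >> + << a *g k1 >> * pd v << b *g k2 >>.
Proof.
(* Each rewrite is confined to one subterm: comparing distinct monomials with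
   coefficients in [R[i]] by conversion is prohibitively slow. *)
rewrite [in X in X = _]mulUU [X in X = _]pdU [X in _ = X * _ + _]pdU.
rewrite [X in _ = _ + _ * X]pdU [X in _ = X + _]mulUU [X in _ = _ + X]mulUU.
rewrite mulcmE mulrnDr monalgUD; apply: (congr2 +%R).
  have [->|k1v] := eqVneq (k1 v) 0%N; first by rewrite !mulr0n mul0r !monalgU0.
  by rewrite mulrnAl divcm_mulcmUl // lt0n.
have [->|k2v] := eqVneq (k2 v) 0%N; first by rewrite !mulr0n mulr0 !monalgU0.
by rewrite mulrnAr divcm_mulcmUr // lt0n.
Qed.

Lemma pdM v p q : pd v (p * q) = pd v p * q + p * pd v q.
Proof.
have monomial_left a k :
    pd v (<< a *g k >> * q) = pd v << a *g k >> * q + << a *g k >> * pd v q.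
  rewrite [q]monalgE !mulr_sumr !raddf_sum mulr_sumr -big_split /=.
  by apply: eq_bigr => k2 _; exact: pdM_monomial.
rewrite [p]monalgE !mulr_suml !raddf_sum mulr_suml -big_split /=.
by apply: eq_bigr => k1 _; exact: monomial_left.
Qed.

Lemma varsP v p :
  reflect (exists2 m, m \in msupp p & m v != 0%N) (v \in vars p).
Proof.
rewrite /vars mem_undup; apply: (iffP flatten_mapP) => -[m mp vm].
  by exists m; rewrite // cmE_neq0.
by exists m; rewrite // -cmE_neq0.
Qed.

Lemma pd_eq0 v p : v \notin vars p -> pd v p = 0.
Proof.
move=> vp; apply/malgP => m; rewrite mcoeff_pd mcoeff0.
suff /mcoeff_outdom-> : mulcm m (ucm v) \notin msupp p by rewrite mul0rn.
apply: contra vp => mp; apply/varsP; exists (mulcm m (ucm v)) => //.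
by rewrite mulcmE ucmE eqxx addn1.
Qed.

Definition vars_in_pred (pT : predType V) (A : pT) : pred O :=
  fun p => all (mem A) (vars p).
Definition vars_in (pT : predType V) (A : pT) :=
  [qualify a p | vars_in_pred A p].

Section VarsIn.
Variables (pT : predType V) (A : pT).

Lemma vars_inP p : reflect {subset vars p <= A} (p \is a vars_in A).
Proof. exact: allP. Qed.

Lemma vars_in_msuppP p :
  reflect (forall m, m \in msupp p -> forall v, m v != 0%N -> v \in A)
          (p \is a vars_in A).
Proof.
apply: (iffP (vars_inP p)) => [sub m mp v mv|h v /varsP [m mp mv]].
  by apply: sub; apply/varsP; exists m.
exact: h mv.
Qed.

Lemma vars_in_subalg_closed : subalg_closed (vars_in A).
Proof.
split.
- apply/vars_in_msuppP => m; rewrite -mcoeff_neq0 mcoeff1.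
  by have [-> _ v|_] := eqVneq m mone; rewrite ?cm1 ?eqxx.
- move=> c p q /vars_in_msuppP hp /vars_in_msuppP hq; apply/vars_in_msuppP => m.
  move/(fsubsetP (msuppD_le _ _)); rewrite inE => /orP[|/hq//].
  by move/(fsubsetP (msuppZ_le _ _)) => /hp.
- move=> p q /vars_in_msuppP hp /vars_in_msuppP hq; apply/vars_in_msuppP => m.
  case/msuppM_le => [k1 [k2 [k1p k2q ->]]] v.
  by rewrite cmM addn_eq0 negb_and => /orP[/(hp _ k1p)|/(hq _ k2q)].
Qed.

HB.instance Definition _ :=
  GRing.isSubalgClosed.Build R[i] O (vars_in_pred A) vars_in_subalg_closed.

Lemma vars_in_pd v p : p \is a vars_in A -> pd v p \is a vars_in A.
Proof.
move/vars_in_msuppP => hp; apply/vars_in_msuppP => m.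
rewrite -mcoeff_neq0 mcoeff_pd => nz w mw; apply: (hp (mulcm m (ucm v))).
  by rewrite -mcoeff_neq0; apply: contraNneq nz => ->; rewrite mul0rn.
by rewrite mulcmE addn_eq0 negb_and mw.
Qed.
End VarsIn.

Definition der_apply (P : DerBar R I) (x : O) : O := der_comb pd (vars x) P x.

Lemma der_applyE P x s :
  x \is a vars_in s -> der_apply P x = der_comb pd (undup s) P x.
Proof.
move=> /vars_inP xs; apply: eq_big_uniq_supp; rewrite ?undup_uniq // => b.
  by move=> bx; rewrite pd_eq0 ?mulr0.
by rewrite mem_undup => bs; rewrite pd_eq0 ?mulr0 // (contra (xs b)).
Qed.

Lemma der_apply_is_linear P : linear (der_apply P).
Proof.
move=> c x y; pose s := vars x ++ vars y.
have xs : x \is a vars_in s by apply/vars_inP => b bx; rewrite mem_cat bx.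
have ys : y \is a vars_in s.
  by apply/vars_inP => b b_y; rewrite mem_cat b_y orbT.
rewrite !(der_applyE _ (s := s)) ?rpredD ?rpredZ //.
rewrite /der_comb scaler_sumr -big_split; apply: eq_bigr => b _.
by rewrite linearP mulrDr scalerAr.
Qed.

HB.instance Definition _ P :=
  GRing.isLinear.Build R[i] O O *:%R (der_apply P) (der_apply_is_linear P).

Lemma der_apply_comb c1 c2 P1 P2 x :
  der_apply (der_add (der_scale c1 P1) (der_scale c2 P2)) x
  = c1 *: der_apply P1 x + c2 *: der_apply P2 x.
Proof.
rewrite /der_apply /der_comb !scaler_sumr -big_split /=; apply: eq_bigr => b _.
by rewrite !scalerAl -mulrDl.
Qed.

Lemma vars_in_der_apply (pT : predType V) (A : pT) P x :
  x \is a vars_in A -> {in vars x, forall b, P b \is a vars_in A} ->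
  der_apply P x \is a vars_in A.
Proof.
move=> xA PA; rewrite /der_apply /der_comb big_seq rpred_sum // => b bx.
by rewrite rpredM ?PA ?vars_in_pd.
Qed.

Lemma bracket_term_eq0 P Q an bm :
  bm \notin vars (P an) -> bm \notin vars (Q an) -> bracket_term P Q an bm = 0.
Proof.
by move=> nP nQ; rewrite /bracket_term pderivE !pd_eq0 // !mulr0 subrr.
Qed.

Lemma bracket_term_supp P Q an :
  exists s : seq V, forall bm, bm \notin s -> bracket_term P Q an bm = 0.
Proof.
exists (vars (P an) ++ vars (Q an)) => bm.
by rewrite mem_cat negb_or => /andP[]; exact: bracket_term_eq0.
Qed.

Lemma bracket_sum P Q an s : uniq s ->
  (forall bm, bm \notin s -> bracket_term P Q an bm = 0) ->
  bracket P Q an = \sum_(bm <- s) bracket_term P Q an bm.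
Proof.
move=> us hs; apply: eq_big_uniq_supp; rewrite ?undup_uniq // => bm.
by rewrite mem_undup mem_cat negb_or => /andP[]; exact: bracket_term_eq0.
Qed.

Lemma bracket_der_apply P Q an :
  bracket P Q an = der_apply P (Q an) - der_apply Q (P an).
Proof.
pose s := vars (P an) ++ vars (Q an).
have Ps : P an \is a vars_in s by apply/vars_inP => b b_P; rewrite mem_cat b_P.
have Qs : Q an \is a vars_in s.
  by apply/vars_inP => b b_Q; rewrite mem_cat b_Q orbT.
rewrite (der_applyE _ Qs) (der_applyE _ Ps).
by rewrite /bracket /bracket_term pderivE sumrB.
Qed.

Lemma der_apply_commutator P Q x :
  der_apply P (der_apply Q x) - der_apply Q (der_apply P x)
  = der_apply (bracket P Q) x.
Proof.
pose s := vars x ++ flatten [seq vars (P b) ++ vars (Q b) | b <- vars x].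
have xs : x \is a vars_in s by apply/vars_inP => b bx; rewrite mem_cat bx.
have PQs : {in vars x, forall b, P b \is a vars_in s /\ Q b \is a vars_in s}.
  move=> b bx; split; apply/vars_inP => w wb; rewrite mem_cat; apply/orP; right;
    by apply/flatten_mapP; exists b; rewrite // mem_cat wb ?orbT.
have DxE X : {in vars x, forall b, X b \is a vars_in s} ->
    der_apply X x = der_comb pd (undup s) X x /\ der_apply X x \is a vars_in s.
  by move=> Xs; split; [exact: der_applyE | exact: vars_in_der_apply].
have [DPx DPxs] := DxE P (fun b bx => (PQs b bx).1).
have [DQx DQxs] := DxE Q (fun b bx => (PQs b bx).2).
rewrite (der_applyE P DQxs) (der_applyE Q DPxs) DPx DQx (der_applyE _ xs).
rewrite (der_comb_commutator (d := pd) (fun v => raddfB (pd v)) pdM pd_comm).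
apply: eq_big_seq => b _; have [bx|bx] := boolP (b \in vars x).
  have [Pbs Qbs] := PQs b bx.
  by rewrite bracket_der_apply (der_applyE _ Pbs) (der_applyE _ Qbs).
by rewrite (pd_eq0 bx) !mulr0.
Qed.

Lemma bracket_linearl P1 P2 Q c1 c2 :
  bracket (der_add (der_scale c1 P1) (der_scale c2 P2)) Q
  = der_add (der_scale c1 (bracket P1 Q)) (der_scale c2 (bracket P2 Q)).
Proof.
apply: boolp.funext => an.
rewrite /der_add /der_scale !bracket_der_apply der_apply_comb.
rewrite linearP linearZ /=.
by rewrite !scalerBr opprD addrACA.
Qed.

Lemma bracket_linearr P Q1 Q2 c1 c2 :
  bracket P (der_add (der_scale c1 Q1) (der_scale c2 Q2))
  = der_add (der_scale c1 (bracket P Q1)) (der_scale c2 (bracket P Q2)).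
Proof.
apply: boolp.funext => an.
rewrite /der_add /der_scale !bracket_der_apply der_apply_comb.
rewrite linearP linearZ /=.
by rewrite !scalerBr opprD addrACA.
Qed.

Lemma bracket_diag P : bracket P P = der_zero R I.
Proof. by apply: boolp.funext => an; rewrite bracket_der_apply subrr. Qed.

Lemma bracket_nested P Q S an :
  bracket P (bracket Q S) an
  = der_apply P (der_apply Q (S an)) - der_apply P (der_apply S (Q an))
    - (der_apply Q (der_apply S (P an)) - der_apply S (der_apply Q (P an))).
Proof.
by rewrite bracket_der_apply -der_apply_commutator bracket_der_apply linearB.
Qed.

Lemma bracket_jacobi P Q S :
  der_add (bracket P (bracket Q S))
    (der_add (bracket Q (bracket S P)) (bracket S (bracket P Q)))
  = der_zero R I.
Proof.
have cancel (a b c d e f : O) :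
    a - b - (c - d) + (c - e - (f - b) + (f - d - (a - e))) = 0.
  by ring.
by apply: boolp.funext => an; rewrite /der_add !bracket_nested cancel.
Qed.

Lemma poly_in_vars_ltP p N :
  poly_in_vars_lt p N <-> p \is a vars_in [pred bm : V | `|bm.2|%:Z < N].
Proof. by split => [h|/vars_inP h bm /h]; first apply/vars_inP => bm /h. Qed.

Lemma widening_gap0 : widening_gap (der_zero R I).
Proof.
by move=> K _; exists [::] => n _ a; apply/poly_in_vars_ltP; rewrite rpred0.
Qed.

Lemma widening_gapD P Q :
  widening_gap P -> widening_gap Q -> widening_gap (der_add P Q).
Proof.
move=> hP hQ K K1; have [SP hSP] := hP K K1; have [SQ hSQ] := hQ K K1.
exists (SP ++ SQ) => n; rewrite mem_cat negb_or => /andP[nP nQ] a.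
by apply/poly_in_vars_ltP; rewrite rpredD //; apply/poly_in_vars_ltP; auto.
Qed.

Lemma widening_gapZ c P : widening_gap P -> widening_gap (der_scale c P).
Proof.
move=> hP K K1; have [SP hSP] := hP K K1; exists SP => n nP a.
by apply/poly_in_vars_ltP; rewrite rpredZ //; apply/poly_in_vars_ltP; auto.
Qed.

Lemma rows_vars_bounded P (S : seq int) :
  exists B : nat, forall (a : I) n, n \in S -> poly_in_vars_lt (P (a, n)) B%:Z.
Proof.
pose L := flatten [seq vars (P (a, n)) | a <- enum I, n <- S].
exists (\max_(v <- L) `|v.2|).+1 => a n nS v vP.
rewrite ltz_nat ltnS; apply: leq_bigmax_seq => //; apply/flattenP.
exists (vars (P (a, n))) => //.
by apply/allpairsP; exists (a, n); rewrite mem_enum.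
Qed.

Lemma gap_rows_below P (K B : nat) (S : seq int) (N : int) :
  (forall n, n \notin S ->
     forall a, poly_in_vars_lt (P (a, n)) (`|n|%:Z - K%:Z)) ->
  (forall a n, n \in S -> poly_in_vars_lt (P (a, n)) B%:Z) -> B%:Z <= N ->
  forall bm, `|bm.2|%:Z < N -> poly_in_vars_lt (P bm) N.
Proof.
move=> hgap hS BN [a n] /= nN v vP.
have [nS|nS] := boolP (n \in S).
  by have := hS a n nS v vP; lia.
by have := hgap n nS a v vP; lia.
Qed.

Lemma abs_ge_cofinite (N : nat) :
  exists S : seq int, forall n : int, n \notin S -> (N <= `|n|)%N.
Proof.
exists [seq i%:Z - N%:Z | i <- iota 0 N.*2] => n.
apply: contraR; rewrite -ltnNge => nN.
by apply/mapP; exists (absz (n + N%:Z)); rewrite ?mem_iota; lia.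
Qed.

Lemma widening_gap_bracket P Q :
  widening_gap P -> widening_gap Q -> widening_gap (bracket P Q).
Proof.
move=> hP hQ K K1; have [SP hSP] := hP K K1; have [SQ hSQ] := hQ K K1.
have [BP hBP] := rows_vars_bounded P SP.
have [BQ hBQ] := rows_vars_bounded Q SQ.
have [S0 hS0] := abs_ge_cofinite (maxn BP BQ + K).
exists (SP ++ SQ ++ S0) => n; rewrite !mem_cat !negb_or => /and3P[nP nQ n0] a.
have BN B : (B <= maxn BP BQ)%N -> B%:Z <= `|n|%:Z - K%:Z.
  by move: (hS0 n n0); lia.
have Pbelow := gap_rows_below hSP hBP (BN _ (leq_maxl _ _)).
have Qbelow := gap_rows_below hSQ hBQ (BN _ (leq_maxr _ _)).
apply/poly_in_vars_ltP.
rewrite bracket_der_apply rpredB // vars_in_der_apply //.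
- exact/poly_in_vars_ltP/hSQ.
- by move=> b /(hSQ n nQ a) /Pbelow /poly_in_vars_ltP.
- exact/poly_in_vars_ltP/hSP.
- by move=> b /(hSP n nP a) /Qbelow /poly_in_vars_ltP.
Qed.
End PartialDerivative.

Theorem lemma3p5 (R : realType) (I : finType) :
  (* well defined: for each (a,n), only finitely many (b,m) contribute, and the
     bracket coefficient is the sum over any finite set containing them *)
  (forall (P Q : DerBar R I) (an : Var I),
      (exists s : seq (Var I),
          forall bm, bm \notin s -> bracket_term P Q an bm = 0)
   /\ (forall s : seq (Var I), uniq s ->
          (forall bm, bm \notin s -> bracket_term P Q an bm = 0) ->
          bracket P Q an = \sum_(bm <- s) bracket_term P Q an bm))
  (* Lie algebra: bilinear, alternating, Jacobi *)
  /\ (forall (P1 P2 Q : DerBar R I) (c1 c2 : R[i]),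
        bracket (der_add (der_scale c1 P1) (der_scale c2 P2)) Q
        = der_add (der_scale c1 (bracket P1 Q)) (der_scale c2 (bracket P2 Q)))
  /\ (forall (P Q1 Q2 : DerBar R I) (c1 c2 : R[i]),
        bracket P (der_add (der_scale c1 Q1) (der_scale c2 Q2))
        = der_add (der_scale c1 (bracket P Q1)) (der_scale c2 (bracket P Q2)))
  /\ (forall P : DerBar R I, bracket P P = der_zero R I)
  /\ (forall P Q S : DerBar R I,
        der_add (bracket P (bracket Q S))
          (der_add (bracket Q (bracket S P)) (bracket S (bracket P Q)))
        = der_zero R I)
  (* Der_w O is a Lie subalgebra *)
  /\ Der_w (der_zero R I)
  /\ (forall P Q : DerBar R I, Der_w P -> Der_w Q -> Der_w (der_add P Q))
  /\ (forall (c : R[i]) (P : DerBar R I), Der_w P -> Der_w (der_scale c P))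
  /\ (forall P Q : DerBar R I, Der_w P -> Der_w Q -> Der_w (bracket P Q)).
Proof.
split.
  by move=> P Q an; split; [exact: bracket_term_supp | exact: bracket_sum].
split; first exact: bracket_linearl.
split; first exact: bracket_linearr.
split; first exact: bracket_diag.
split; first exact: bracket_jacobi.
split; first exact: widening_gap0.
split; first exact: widening_gapD.
split; first exact: widening_gapZ.
exact: widening_gap_bracket.
Qed.
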